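(* Let $\eta\colon\mathcal{D}\to\mathcal{D}$ be a polynomial $\tau$-equivariant map, i.e. of the form $\eta(\lambda_1,\lambda_2)=(\Psi(\lambda_1,\lambda_2),\Psi(\lambda_2,\lambda_1))$ with $\Psi$ polynomial. Then $\eta$ extends to a polynomial map $\Phi\colon\mathcal{M}(2;\mathbb{C})\to\mathcal{M}(2;\mathbb{C})$ compatible with conjugation (i.e. $\Phi_{|\mathcal{D}}=\eta$).
   Context: $\mathcal{D}$ is the set of diagonal $2\times2$ complex matrices, identified with $\mathbb{C}^2$ via $\mathrm{diag}(\lambda_1,\lambda_2)\mapsto(\lambda_1,\lambda_2)$; $\tau(\lambda_1,\lambda_2)=(\lambda_2,\lambda_1)$. A map $\Phi$ is compatible with conjugation if $\mathrm{A}\Phi(\mathrm{M})\mathrm{A}^{-1}=\Phi(\mathrm{A}\mathrm{M}\mathrm{A}^{-1})$ for all $\mathrm{A}\in\mathrm{GL}(2;\mathbb{C})$ and all $\mathrm{M}$ where defined. *)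

From HB Require Import structures.
From mathcomp Require Import all_boot all_order all_algebra.
From mathcomp Require Import reals.
From mathcomp Require Import complex.
From mathcomp Require Import mpoly.
Set Implicit Arguments. Unset Strict Implicit. Unset Printing Implicit Defensive.
Import Order.TTheory GRing.Theory Num.Theory.
Local Open Scope ring_scope.

Definition CC (R : realType) : Type := complex R.

Definition diag2 (K : nzRingType) (l1 l2 : K) : 'M[K]_2 :=
  \matrix_(i < 2, j < 2)
    (if i == j then (if val i == 0%N then l1 else l2) else 0).

Definition pt2 (K : Type) (l1 l2 : K) : 'I_2 -> K :=
  fun i => if val i == 0%N then l1 else l2.

Definition mx_entries (K : Type) (M : 'M[K]_2) : 'I_4 -> K :=
  fun k => M (inord (val k %/ 2)) (inord (val k %% 2)).

Definition is_polynomial_map (K : comNzRingType) (Phi : 'M[K]_2 -> 'M[K]_2) : Prop :=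
  exists P : 'M[{mpoly K[4]}]_2,
    forall M : 'M[K]_2, forall i j : 'I_2, Phi M i j = (P i j).@[mx_entries M].

Definition compatible_with_conjugation (K : comUnitRingType) (Phi : 'M[K]_2 -> 'M[K]_2) : Prop :=
  forall A M : 'M[K]_2, A \in unitmx ->
    A *m Phi M *m invmx A = Phi (A *m M *m invmx A).

From HB Require Import structures.
From mathcomp Require Import all_boot all_order all_algebra.
From mathcomp Require Import reals.
From mathcomp Require Import complex.
From mathcomp Require Import mpoly.
Local Open Scope ring_scope.
Set Implicit Arguments. Unset Strict Implicit.
Import GRing.Theory.

(* Take Phi(M) := Psi(M, tr(M) I - M). On diag(l1, l2) the second argument
   is diag(l2, l1), so Phi extends the tau-equivariant map. Phi commutes with
   every ring morphism of matrix rings that fixes scalars and commutes with the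
   trace: conjugation by an invertible A is one, which gives compatibility, and
   entrywise evaluation of the generic matrix of indeterminates is another,
   which shows that Phi is polynomial. *)

Section MmapMorphism.
Variables (n : nat) (R S T : nzRingType).
Implicit Types (p : {mpoly R[n]}).

Lemma eq_mmap (f1 f2 : R -> S) (h1 h2 : 'I_n -> S) p :
  f1 =1 f2 -> h1 =1 h2 -> mmap f1 h1 p = mmap f2 h2 p.
Proof.
move=> ef eh; apply: eq_bigr => m _; rewrite ef; congr (_ * _).
exact: mmap1_eq.
Qed.

Lemma rmorph_mmap (g : {rmorphism S -> T}) (f : R -> S) (h : 'I_n -> S) p :
  g (mmap f h p) = mmap (g \o f) (g \o h) p.
Proof.
rewrite rmorph_sum; apply: eq_bigr => m _; rewrite rmorphM rmorph_prod.
by congr (_ * _); apply: eq_bigr => i _; rewrite rmorphXn.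
Qed.

End MmapMorphism.

Lemma pt2_comp (S T : Type) (g : S -> T) (a b : S) :
  g \o pt2 a b =1 pt2 (g a) (g b).
Proof. by move=> i; rewrite /pt2 /=; case: ifP. Qed.

(* [(\tr M)%:M - M] is the adjugate of a 2x2 matrix (Cayley-Hamilton). *)
Definition adj2 (K : nzRingType) (M : 'M[K]_2) : 'M[K]_2 := (\tr M)%:M - M.

Definition mx_adj_eval (K S : nzRingType) (f : K -> S) (p : {mpoly K[2]})
    (M : 'M[S]_2) : 'M[S]_2 :=
  mmap (fun c => (f c)%:M) (pt2 M (adj2 M)) p.

Lemma rmorph_mx_adj_eval (K S T : nzRingType)
    (g : {rmorphism 'M[S]_2 -> 'M[T]_2}) (f : K -> S) (f' : K -> T)
    (p : {mpoly K[2]}) (M : 'M[S]_2) :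
  (forall c, g (f c)%:M = (f' c)%:M) -> g (adj2 M) = adj2 (g M) ->
  g (mx_adj_eval f p M) = mx_adj_eval f' p (g M).
Proof.
move=> gf gadj; rewrite rmorph_mmap; apply: eq_mmap => [c|i]; first exact: gf.
by rewrite pt2_comp gadj.
Qed.

Lemma map_adj2 (K L : nzRingType) (f : {rmorphism K -> L}) (M : 'M[K]_2) :
  map_mx f (adj2 M) = adj2 (map_mx f M).
Proof. by rewrite /adj2 rmorphB /= map_scalar_mx trace_map_mx. Qed.

Definition generic_mx (K : comNzRingType) : 'M[{mpoly K[4]}]_2 :=
  \matrix_(i, j) 'X_(inord (i * 2 + j)).

Lemma map_generic_mx (K : comNzRingType) (M : 'M[K]_2) :
  map_mx (meval (mx_entries M)) (generic_mx K) = M.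
Proof.
apply/matrixP => i j; rewrite !mxE mevalXU /mx_entries.
by case: i => [[|[|//]] ?]; case: j => [[|[|//]] ?];
  congr (M _ _); apply/val_inj; rewrite /= !inordK.
Qed.

Lemma mx_adj_eval_polynomial (K : comNzRingType) (p : {mpoly K[2]}) :
  is_polynomial_map (mx_adj_eval idfun p).
Proof.
exists (mx_adj_eval (@mpolyC 4 K) p (generic_mx K)) => M i j.
rewrite -[in LHS](map_generic_mx M).
rewrite -(rmorph_mx_adj_eval (g := map_mx (meval (mx_entries M)))
  (f := @mpolyC 4 K)).
- by rewrite mxE.
- by move=> c /=; rewrite map_scalar_mx /= mevalC.
- exact: map_adj2.
Qed.

Section Conjugation.
Variables (K : comUnitRingType) (A : 'M[K]_2).
Hypothesis A_unit : A \in unitmx.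

Definition conjmx_by (M : 'M[K]_2) : 'M[K]_2 := A *m M *m invmx A.

Fact conjmx_by_is_zmod_morphism : zmod_morphism conjmx_by.
Proof. by move=> M N; rewrite /conjmx_by mulmxBr mulmxBl. Qed.

Fact conjmx_by_is_monoid_morphism : monoid_morphism conjmx_by.
Proof.
split=> [|M N]; first by rewrite /conjmx_by mulmx1 mulmxV.
by rewrite /conjmx_by -!mulmxE !mulmxA mulmxKV.
Qed.

HB.instance Definition _ :=
  GRing.isZmodMorphism.Build 'M[K]_2 'M[K]_2 conjmx_by
    conjmx_by_is_zmod_morphism.
HB.instance Definition _ :=
  GRing.isMonoidMorphism.Build 'M[K]_2 'M[K]_2 conjmx_by
    conjmx_by_is_monoid_morphism.

Lemma conjmx_by_scalar (c : K) : conjmx_by c%:M = c%:M.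
Proof. by rewrite /conjmx_by scalar_mxC -mulmxA mulmxV ?mulmx1. Qed.

Lemma conjmx_by_adj2 (M : 'M[K]_2) : conjmx_by (adj2 M) = adj2 (conjmx_by M).
Proof.
rewrite /adj2 rmorphB /= conjmx_by_scalar /conjmx_by.
by rewrite mxtrace_mulC mulmxA mulVmx ?mul1mx.
Qed.

Lemma conjmx_by_mx_adj_eval (p : {mpoly K[2]}) (M : 'M[K]_2) :
  conjmx_by (mx_adj_eval idfun p M) = mx_adj_eval idfun p (conjmx_by M).
Proof.
by apply: rmorph_mx_adj_eval; [exact: conjmx_by_scalar | exact: conjmx_by_adj2].
Qed.

End Conjugation.

Lemma mx_adj_eval_compatible (K : comUnitRingType) (p : {mpoly K[2]}) :
  compatible_with_conjugation (mx_adj_eval idfun p).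
Proof. by move=> A M A_unit; exact: conjmx_by_mx_adj_eval. Qed.

Section Diag2.
Variable K : comNzRingType.

Definition diag2_pair (x : K * K) : 'M[K]_2 := diag2 x.1 x.2.

Fact diag2_pair_is_zmod_morphism : zmod_morphism diag2_pair.
Proof.
move=> [a b] [c d]; apply/matrixP => i j; rewrite !mxE.
by case: i => [[|[|//]] ?]; case: j => [[|[|//]] ?] /=; rewrite ?subr0.
Qed.

Lemma scalar_mx_diag2 (c : K) : c%:M = diag2_pair (c, c).
Proof.
apply/matrixP => i j; rewrite !mxE.
by case: i => [[|[|//]] ?]; case: j => [[|[|//]] ?].
Qed.

Fact diag2_pair_is_monoid_morphism : monoid_morphism diag2_pair.
Proof.
split=> [|[a b] [c d]]; first by rewrite -idmxE scalar_mx_diag2.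
apply/matrixP => i j; rewrite !mxE big_ord_recl big_ord1 !mxE.
by case: i => [[|[|//]] ?]; case: j => [[|[|//]] ?] /=;
  rewrite ?mulr0 ?mul0r ?addr0 ?add0r.
Qed.

HB.instance Definition _ :=
  GRing.isZmodMorphism.Build (K * K)%type 'M[K]_2 diag2_pair
    diag2_pair_is_zmod_morphism.
HB.instance Definition _ :=
  GRing.isMonoidMorphism.Build (K * K)%type 'M[K]_2 diag2_pair
    diag2_pair_is_monoid_morphism.

Lemma adj2_diag2 (a b : K) : adj2 (diag2_pair (a, b)) = diag2_pair (b, a).
Proof.
rewrite /adj2 /mxtrace big_ord_recl big_ord1.
apply/matrixP => i j; rewrite !mxE.
case: i => [[|[|//]] ?]; case: j => [[|[|//]] ?] /=; rewrite ?mulr0n ?mulr1n.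
- by rewrite (addrC a) addrK.
- by rewrite subr0.
- by rewrite subr0.
- by rewrite addrK.
Qed.

Lemma mx_adj_eval_diag2 (p : {mpoly K[2]}) (a b : K) :
  mx_adj_eval idfun p (diag2 a b) = diag2 p.@[pt2 a b] p.@[pt2 b a].
Proof.
pose x := mmap (fun c : K => (c, c)) (pt2 (a, b) (b, a)) p.
have -> : mx_adj_eval idfun p (diag2 a b) = diag2_pair x.
  rewrite rmorph_mmap; apply: eq_mmap => [c|i]; first exact: scalar_mx_diag2.
  by rewrite pt2_comp adj2_diag2.
rewrite /diag2_pair /x (rmorph_mmap fst) (rmorph_mmap snd).
by congr diag2; apply: eq_mmap => // i; rewrite pt2_comp.
Qed.

End Diag2.

Theorem proposition2p4 (R : realType) (Psi : {mpoly (CC R)[2]}) :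
  exists Phi : 'M[CC R]_2 -> 'M[CC R]_2,
    [/\ is_polynomial_map Phi,
        compatible_with_conjugation Phi &
        forall l1 l2 : CC R,
          Phi (diag2 l1 l2) = diag2 Psi.@[pt2 l1 l2] Psi.@[pt2 l2 l1]].
Proof.
exists (mx_adj_eval idfun Psi); split.
- exact: mx_adj_eval_polynomial.
- exact: mx_adj_eval_compatible.
- exact: mx_adj_eval_diag2.
Qed.
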